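(* There exist a constant $c>0$ and infinitely many values of $n$ such that for each such $n$ there is a tabletop rearrangement instance with $n$ uniform cylinders (congruent disc footprints) whose unlabeled $\mathrm{MRB}$ is at least $c\sqrt{n}$, and whose labeled $\mathrm{MRB}$ (for any assignment of labels to the start and goal poses) is at least $c\sqrt{n}$. That is, for both the labeled and unlabeled problems with $n$ uniform cylinders, $\mathrm{MRB}$ is lower bounded by $\Omega(\sqrt{n})$ in the worst case.
   Context: A tabletop rearrangement instance consists of $n$ objects in a bounded planar workspace, with a feasible start arrangement and a feasible goal arrangement (poses in $SE(2)$; feasible means no two placed footprints have intersecting interiors). In the labeled setting each object $o_i$ must end at its own goal pose $x_i^g$; in the unlabeled setting the (congruent) objects are interchangeable and must end occupying all goal poses. A plan with external buffers: each object is picked from its start pose exactly once and either placed at a goal pose (its own goal in the labeled case, any unoccupied goal in the unlabeled case) or into an external buffer outside the workspace (unlimited capacity), in the latter case later moved from the buffer to such a goal pose; an object may be placed at a goal pose only if it overlaps no object currently in the workspace; at the end the goal requirement holds. Running buffers at a moment = number of objects stored in buffers; $\mathrm{MRB}$ = minimum over plans of the maximum number of running buffers. *)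

From Stdlib Require Import Reals Lra List.
Import ListNotations.
Open Scope R_scope.

(** Points of the plane. A uniform cylinder's footprint is a disc of radius r,
    so its pose in SE(2) is determined (as far as the footprint is concerned)
    by the centre of the disc. *)
Definition point := (R * R)%type.

Definition dist2 (p q : point) : R :=
  (fst p - fst q) ^ 2 + (snd p - snd q) ^ 2.

Definition in_open_disc (r : R) (c z : point) : Prop := dist2 z c < r ^ 2.

Definition overlap (r : R) (p q : point) : Prop :=
  exists z, in_open_disc r p z /\ in_open_disc r q z.

Definition in_workspace (L r : R) (c : point) : Prop :=
  forall z, in_open_disc r c z ->
    0 <= fst z <= L /\ 0 <= snd z <= L.

Definition valid_instance (n : nat) (r L : R) (s g : nat -> point) : Prop :=
  0 < r /\
  (forall i, (i < n)%nat -> in_workspace L r (s i) /\ in_workspace L r (g i)) /\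
  (forall i j, (i < n)%nat -> (j < n)%nat -> i <> j -> ~ overlap r (s i) (s j)) /\
  (forall i j, (i < n)%nat -> (j < n)%nat -> i <> j -> ~ overlap r (g i) (g j)).

Definition is_perm (n : nat) (sigma : nat -> nat) : Prop :=
  (forall i, (i < n)%nat -> (sigma i < n)%nat) /\
  (forall i j, (i < n)%nat -> (j < n)%nat -> sigma i = sigma j -> i = j).

Inductive lloc := LAtStart | LInBuf | LAtGoal.
Definition lstate := nat -> lloc.

Inductive laction :=
| LDirect (i : nat)
| LToBuf (i : nat)
| LFromBuf (i : nat).

Definition lupd (st : lstate) (i : nat) (v : lloc) : lstate :=
  fun k => if Nat.eq_dec k i then v else st k.

Definition lpos (s g : nat -> point) (st : lstate) (k : nat) : option point :=
  match st k with
  | LAtStart => Some (s k)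
  | LInBuf => None
  | LAtGoal => Some (g k)
  end.

Definition lfree (n : nat) (r : R) (s g : nat -> point) (st : lstate)
    (i : nat) (p : point) : Prop :=
  forall k, (k < n)%nat -> k <> i ->
    match lpos s g st k with Some q => ~ overlap r p q | None => True end.

Definition lapply (st : lstate) (a : laction) : lstate :=
  match a with
  | LDirect i => lupd st i LAtGoal
  | LToBuf i => lupd st i LInBuf
  | LFromBuf i => lupd st i LAtGoal
  end.

Definition lstep_ok (n : nat) (r : R) (s g : nat -> point) (st : lstate)
    (a : laction) : Prop :=
  match a with
  | LDirect i => (i < n)%nat /\ st i = LAtStart /\ lfree n r s g st i (g i)
  | LToBuf i => (i < n)%nat /\ st i = LAtStart
  | LFromBuf i => (i < n)%nat /\ st i = LInBuf /\ lfree n r s g st i (g i)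
  end.

Definition lfinal (n : nat) (st : lstate) : Prop :=
  forall i, (i < n)%nat -> st i = LAtGoal.

Fixpoint lplan_ok (n : nat) (r : R) (s g : nat -> point) (st : lstate)
    (plan : list laction) : Prop :=
  match plan with
  | [] => lfinal n st
  | a :: p => lstep_ok n r s g st a /\ lplan_ok n r s g (lapply st a) p
  end.

Fixpoint lstates (st : lstate) (plan : list laction) : list lstate :=
  st :: match plan with
        | [] => []
        | a :: p => lstates (lapply st a) p
        end.

Definition lbuf_count (n : nat) (st : lstate) : nat :=
  length (filter (fun k => match st k with LInBuf => true | _ => false end)
                 (seq 0 n)).

Definition linit : lstate := fun _ => LAtStart.

Definition lmax_buffers (n : nat) (plan : list laction) : nat :=
  fold_right Nat.max 0%nat (map (lbuf_count n) (lstates linit plan)).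

Inductive uloc := UAtStart | UInBuf | UAtGoal (j : nat).
Definition ustate := nat -> uloc.

Inductive uaction :=
| UDirect (i j : nat)
| UToBuf (i : nat)
| UFromBuf (i j : nat).

Definition uupd (st : ustate) (i : nat) (v : uloc) : ustate :=
  fun k => if Nat.eq_dec k i then v else st k.

Definition upos (s g : nat -> point) (st : ustate) (k : nat) : option point :=
  match st k with
  | UAtStart => Some (s k)
  | UInBuf => None
  | UAtGoal j => Some (g j)
  end.

Definition ufree (n : nat) (r : R) (s g : nat -> point) (st : ustate)
    (i j : nat) : Prop :=
  (j < n)%nat /\
  (forall k, (k < n)%nat -> st k <> UAtGoal j) /\
  (forall k, (k < n)%nat -> k <> i ->
    match upos s g st k with Some q => ~ overlap r (g j) q | None => True end).

Definition uapply (st : ustate) (a : uaction) : ustate :=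
  match a with
  | UDirect i j => uupd st i (UAtGoal j)
  | UToBuf i => uupd st i UInBuf
  | UFromBuf i j => uupd st i (UAtGoal j)
  end.

Definition ustep_ok (n : nat) (r : R) (s g : nat -> point) (st : ustate)
    (a : uaction) : Prop :=
  match a with
  | UDirect i j => (i < n)%nat /\ st i = UAtStart /\ ufree n r s g st i j
  | UToBuf i => (i < n)%nat /\ st i = UAtStart
  | UFromBuf i j => (i < n)%nat /\ st i = UInBuf /\ ufree n r s g st i j
  end.

Definition ufinal (n : nat) (st : ustate) : Prop :=
  forall j, (j < n)%nat -> exists i, (i < n)%nat /\ st i = UAtGoal j.

Fixpoint uplan_ok (n : nat) (r : R) (s g : nat -> point) (st : ustate)
    (plan : list uaction) : Prop :=
  match plan with
  | [] => ufinal n st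
  | a :: p => ustep_ok n r s g st a /\ uplan_ok n r s g (uapply st a) p
  end.

Fixpoint ustates (st : ustate) (plan : list uaction) : list ustate :=
  st :: match plan with
        | [] => []
        | a :: p => ustates (uapply st a) p
        end.

Definition ubuf_count (n : nat) (st : ustate) : nat :=
  length (filter (fun k => match st k with UInBuf => true | _ => false end)
                 (seq 0 n)).

Definition uinit : ustate := fun _ => UAtStart.

Definition umax_buffers (n : nat) (plan : list uaction) : nat :=
  fold_right Nat.max 0%nat (map (ubuf_count n) (ustates uinit plan)).

From Stdlib Require Import Reals Lra Lia List Arith FunctionalExtensionality.

(* Take n = 2q(2q+1) discs of diameter 1: the starts on a grid of 2q rows and
   2q+1 columns, the goals on the grid of 2q+1 rows and 2q columns shifted by
   half a unit in both directions, so that every goal overlaps the 2x2 block of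
   starts around it.  A goal can only be filled once these four starts have been
   vacated, and a vacated start stays vacated.  Since every action fills at most
   one goal, some moment of any plan has exactly half of the goals filled.  A
   goal row with r > 0 filled goals forces r + 1 vacated starts in each of the two
   start rows it meets; matching the 2q+1 goal rows with the 2q start rows after
   dropping a goal row with fewest filled goals shows that at least q more starts
   are vacated than goals are filled, so at least q = Omega(sqrt n) objects are
   in buffers at that moment.  A labeled plan is in particular an unlabeled one,
   which gives the same bound for every labeling. *)

Local Open Scope nat_scope.

Fixpoint sum_lt (f : nat -> nat) (N : nat) : nat :=
  match N with 0 => 0 | S N' => sum_lt f N' + f N' end.

Definition count_lt (p : nat -> bool) (N : nat) : nat :=
  sum_lt (fun i => if p i then 1 else 0) N.

Lemma sum_lt_le f g N :
  (forall i, i < N -> f i <= g i) -> sum_lt f N <= sum_lt g N.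
Proof.
  induction N as [|N IH]; intros H; simpl; [lia|].
  assert (sum_lt f N <= sum_lt g N) by (apply IH; intros; apply H; lia).
  specialize (H N). lia.
Qed.

Lemma sum_lt_add f g N : sum_lt (fun i => f i + g i) N = sum_lt f N + sum_lt g N.
Proof. induction N; simpl; lia. Qed.

Lemma sum_lt_mul_l c f N : sum_lt (fun i => c * f i) N = c * sum_lt f N.
Proof. induction N; simpl; lia. Qed.

Lemma sum_lt_const c N : sum_lt (fun _ => c) N = N * c.
Proof. induction N; simpl; lia. Qed.

Lemma sum_lt_add_range f A B :
  sum_lt f (A + B) = sum_lt f A + sum_lt (fun i => f (A + i)) B.
Proof.
  induction B as [|B IH]; simpl; [rewrite Nat.add_0_r; lia|].
  rewrite Nat.add_succ_r. simpl. lia.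
Qed.

Lemma sum_lt_mul_range f H W :
  sum_lt f (H * W) = sum_lt (fun b => sum_lt (fun c => f (b * W + c)) W) H.
Proof.
  induction H as [|H IH]; simpl; [reflexivity|].
  rewrite Nat.add_comm, sum_lt_add_range, IH. lia.
Qed.

Lemma exists_argmin_lt f N :
  0 < N -> exists M, M < N /\ forall b, b < N -> f M <= f b.
Proof.
  induction N as [|N IH]; intros HN; [lia|].
  destruct (Nat.eq_dec N 0) as [->|HN0].
  - exists 0. split; [lia|]. intros b Hb. replace b with 0 by lia. lia.
  - destruct IH as [M [HM Hmin]]; [lia|].
    destruct (le_lt_dec (f M) (f N)).
    + exists M. split; [lia|]. intros b Hb.
      destruct (Nat.eq_dec b N) as [->|]; [lia|]. apply Hmin. lia.
    + exists N. split; [lia|]. intros b Hb.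
      destruct (Nat.eq_dec b N) as [->|]; [lia|]. specialize (Hmin b). lia.
Qed.

Lemma count_lt_filter p N : length (filter p (seq 0 N)) = count_lt p N.
Proof.
  induction N as [|N IH]; [reflexivity|].
  rewrite seq_S, filter_app, length_app, IH. unfold count_lt. simpl.
  destruct (p N); simpl; lia.
Qed.

Lemma count_lt_le_bound p N : count_lt p N <= N.
Proof. unfold count_lt. induction N; simpl; [lia|]. destruct (p N); lia. Qed.

Lemma count_lt_all p N : (forall i, i < N -> p i = true) -> count_lt p N = N.
Proof.
  unfold count_lt. induction N as [|N IH]; intros H; simpl; [reflexivity|].
  rewrite H, IH by (intros; try apply H; lia). lia.
Qed.

Lemma count_lt_none p N : (forall i, i < N -> p i = false) -> count_lt p N = 0.
Proof.
  unfold count_lt. induction N as [|N IH]; intros H; simpl; [reflexivity|].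
  rewrite H, IH by (intros; try apply H; lia). lia.
Qed.

Lemma count_lt_or p a b N :
  (forall i, i < N -> p i = true -> a i = true \/ b i = true) ->
  count_lt p N <= count_lt a N + count_lt b N.
Proof.
  intros H. unfold count_lt. rewrite <- sum_lt_add. apply sum_lt_le.
  intros i Hi. specialize (H i Hi).
  destruct (p i), (a i), (b i); try lia; destruct H; auto; discriminate.
Qed.

Lemma count_lt_eqb_le_1 x N : count_lt (Nat.eqb x) N <= 1.
Proof.
  destruct (le_lt_dec N x).
  - rewrite count_lt_none; [lia|]. intros i Hi. apply Nat.eqb_neq. lia.
  - replace N with (S x + (N - S x)) by lia. unfold count_lt.
    rewrite sum_lt_add_range. simpl. rewrite Nat.eqb_refl.
    pose proof (count_lt_none (Nat.eqb x) x) as Hbelow.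
    pose proof (count_lt_none (fun i => Nat.eqb x (S (x + i))) (N - S x)) as Habove.
    unfold count_lt in *. rewrite Hbelow, Habove; intros; try apply Nat.eqb_neq; lia.
Qed.

Lemma count_lt_add_one p p' x N :
  (forall j, j < N -> p' j = true -> p j = true \/ j = x) ->
  count_lt p' N <= count_lt p N + 1.
Proof.
  intros H. pose proof (count_lt_eqb_le_1 x N).
  enough (count_lt p' N <= count_lt p N + count_lt (Nat.eqb x) N) by lia.
  apply count_lt_or. intros j Hj Hp. destruct (H j Hj Hp); auto.
  right. apply Nat.eqb_eq. auto.
Qed.

Lemma count_lt_inj (p q : nat -> bool) (h : nat -> nat) n N :
  (forall i, i < n -> p i = true -> h i < N /\ q (h i) = true) ->
  (forall i i', i < n -> i' < n -> p i = true -> p i' = true -> h i = h i' -> i = i') ->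
  count_lt p n <= count_lt q N.
Proof.
  intros Hmaps Hinj. rewrite <- !count_lt_filter, <- (length_map h).
  apply NoDup_incl_length.
  - apply NoDup_map_NoDup_ForallPairs; [|apply NoDup_filter, seq_NoDup].
    intros x y Hx Hy. apply filter_In in Hx as [Hx Px], Hy as [Hy Py].
    apply in_seq in Hx, Hy. apply Hinj; auto; lia.
  - intros y Hy. apply in_map_iff in Hy as [x [<- Hx]].
    apply filter_In in Hx as [Hx Px]. apply in_seq in Hx.
    destruct (Hmaps x) as [Hlt Hq]; [lia|auto|].
    apply filter_In. split; [apply in_seq; lia|auto].
Qed.

Lemma count_shadow_ge (f g : nat -> bool) K :
  (forall a, a < K -> f a = true -> g a = true /\ g (S a) = true) ->
  count_lt f K + Nat.min 1 (count_lt f K) <= count_lt g (S K).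
Proof.
  unfold count_lt. induction K as [|K IH]; intros H; cbn [sum_lt]; [lia|].
  specialize (IH (fun a Ha => H a (Nat.lt_lt_succ_r _ _ Ha))). cbn [sum_lt] in IH.
  destruct (f K) eqn:E.
  - destruct (H K (Nat.lt_succ_diag_r _) E) as [G1 G2]. rewrite G2, G1. rewrite G1 in IH.
    destruct (sum_lt (fun i => if f i then 1 else 0) K); lia.
  - destruct (g (S K)); lia.
Qed.

(* Pair [u b] with [v b] for [b < M] and with [v (b - 1)] for [b > M]. *)
Lemma sum_lt_drop_one_le (u v : nat -> nat) K :
  (forall t, t < K -> u t <= v t /\ u (S t) <= v t) ->
  forall M, M <= K -> sum_lt u (S K) <= sum_lt v K + u M.
Proof.
  induction K as [|K IH]; intros H M HM; simpl.
  - replace M with 0 by lia. lia.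
  - destruct (H K (Nat.lt_succ_diag_r _)) as [Hl Hr].
    destruct (Nat.eq_dec M (S K)) as [->|HMK].
    + enough (sum_lt u K <= sum_lt v K) by lia.
      apply sum_lt_le. intros. apply H. lia.
    + specialize (IH (fun t Ht => H t (Nat.lt_lt_succ_r _ _ Ht)) M ltac:(lia)).
      simpl in IH. lia.
Qed.

Section GridShadow.

Variable k : nat.
Variables filled vacated : nat -> bool.

(* Goal [b * k + a] lies in goal row [b], column [a], and start [t * S k + c] in
   start row [t], column [c]; the goal meets the starts in rows [b - 1], [b] and
   columns [a], [a + 1]. *)
Hypothesis filled_shadow : forall b a t c,
  b < S k -> a < k -> t < k -> (t = b \/ S t = b) -> (c = a \/ c = S a) ->
  filled (b * k + a) = true -> vacated (t * S k + c) = true.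

Let row_filled b := count_lt (fun a => filled (b * k + a)) k.
Let row_vacated t := count_lt (fun c => vacated (t * S k + c)) (S k).
Let row_weight b := row_filled b + Nat.min 1 (row_filled b).
Let nonempty_rows := sum_lt (fun b => Nat.min 1 (row_filled b)) (S k).

Lemma row_weight_le_row_vacated t : t < k ->
  row_weight t <= row_vacated t /\ row_weight (S t) <= row_vacated t.
Proof.
  intros Ht. split; apply count_shadow_ge; intros a Ha Hfa; cbv beta in Hfa.
  - split; apply (filled_shadow t a t); auto; lia.
  - split; apply (filled_shadow (S t) a t); auto; lia.
Qed.

Lemma count_filled_rows : count_lt filled (k * S k) = sum_lt row_filled (S k).
Proof. unfold count_lt. rewrite Nat.mul_comm, sum_lt_mul_range. reflexivity. Qed.

Lemma count_vacated_add_nonempty_rows M : M < S k ->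
  count_lt filled (k * S k) + nonempty_rows <= count_lt vacated (k * S k) + row_weight M.
Proof.
  intros HM. rewrite count_filled_rows.
  replace (count_lt vacated (k * S k)) with (sum_lt row_vacated k)
    by (unfold count_lt; rewrite sum_lt_mul_range; reflexivity).
  unfold nonempty_rows. rewrite <- sum_lt_add.
  apply sum_lt_drop_one_le; [apply row_weight_le_row_vacated|lia].
Qed.

Lemma half_filled_vacated q : k = 2 * q ->
  count_lt filled (k * S k) = q * S k -> q * S k + q <= count_lt vacated (k * S k).
Proof.
  intros Hk Hhalf.
  (* A goal row with fewest filled goals has at most the average q of them. *)
  destruct (exists_argmin_lt row_filled (S k)) as [M [HM Hmin]]; [lia|].
  pose proof (count_vacated_add_nonempty_rows M HM) as Hvac.
  assert (Hsum : S k * row_filled M <= q * S k).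
  { rewrite <- Hhalf, count_filled_rows, <- sum_lt_const. apply sum_lt_le. auto. }
  unfold row_weight in Hvac.
  destruct (row_filled M) as [|rM] eqn:HrM.
  - assert (Hspread : q * S k <= k * nonempty_rows).
    { rewrite <- Hhalf, count_filled_rows. unfold nonempty_rows.
      rewrite <- sum_lt_mul_l. apply sum_lt_le. intros b _.
      pose proof (count_lt_le_bound (fun a => filled (b * k + a)) k) as Hrow.
      fold (row_filled b) in Hrow. destruct (row_filled b); lia. }
    subst k. nia.
  - assert (Hall : S k <= nonempty_rows).
    { unfold nonempty_rows. rewrite <- (Nat.mul_1_r (S k)) at 1. rewrite <- sum_lt_const.
      apply sum_lt_le. intros b Hb. specialize (Hmin b Hb). lia. }
    subst k. nia.
Qed.

End GridShadow.

Local Open Scope R_scope.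

Lemma overlap_iff r p q : 0 < r -> overlap r p q <-> dist2 p q < 4 * r ^ 2.
Proof.
  intros Hr. destruct p as [a b], q as [c d]. unfold overlap, in_open_disc, dist2; simpl.
  split.
  - intros [[x y] [H1 H2]]; simpl in *.
    assert ((a - c) ^ 2 <= 2 * (x - a) ^ 2 + 2 * (x - c) ^ 2)
      by (pose proof (pow2_ge_0 (2 * x - a - c)); nra).
    assert ((b - d) ^ 2 <= 2 * (y - b) ^ 2 + 2 * (y - d) ^ 2)
      by (pose proof (pow2_ge_0 (2 * y - b - d)); nra).
    lra.
  - intros H. exists ((a + c) / 2, (b + d) / 2). simpl. split; nra.
Qed.

Lemma in_open_disc_coords r c z : 0 < r -> in_open_disc r c z ->
  fst c - r < fst z < fst c + r /\ snd c - r < snd z < snd c + r.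
Proof.
  intros Hr. destruct c as [a b], z as [x y]. unfold in_open_disc, dist2; simpl. intros H.
  pose proof (pow2_ge_0 (x - a)). pose proof (pow2_ge_0 (y - b)).
  split; split; nra.
Qed.

Lemma pow2_INR_sub_ge_1 x y : x <> y -> 1 <= (INR x - INR y) ^ 2.
Proof.
  intros H. destruct (Nat.lt_gt_cases x y) as [[Hl|Hl] _]; auto.
  - assert (INR x + 1 <= INR y) by (rewrite <- S_INR; apply le_INR; lia). nra.
  - assert (INR y + 1 <= INR x) by (rewrite <- S_INR; apply le_INR; lia). nra.
Qed.

Definition grid_point (W : nat) (dx dy : R) (i : nat) : point :=
  (INR (i mod W) + dx, INR (i / W) + dy).

Lemma grid_point_index W dx dy t c : (c < W)%nat ->
  grid_point W dx dy (t * W + c) = (INR c + dx, INR t + dy).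
Proof.
  intros Hc. unfold grid_point.
  rewrite Nat.add_comm, Nat.Div0.mod_add, Nat.mod_small, Nat.div_add, Nat.div_small by lia.
  reflexivity.
Qed.

Lemma grid_point_sep W dx dy i j : (W <> 0)%nat -> i <> j ->
  1 <= dist2 (grid_point W dx dy i) (grid_point W dx dy j).
Proof.
  intros HW Hij. unfold dist2, grid_point; simpl.
  pose proof (Nat.div_mod_eq i W). pose proof (Nat.div_mod_eq j W).
  replace (INR (i mod W) + dx - (INR (j mod W) + dx)) with (INR (i mod W) - INR (j mod W)) by ring.
  replace (INR (i / W) + dy - (INR (j / W) + dy)) with (INR (i / W) - INR (j / W)) by ring.
  pose proof (pow2_ge_0 (INR (i mod W) - INR (j mod W))).
  pose proof (pow2_ge_0 (INR (i / W) - INR (j / W))).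
  destruct (Nat.eq_dec (i mod W) (j mod W)) as [E|E].
  - assert (Hrow : (i / W <> j / W)%nat) by (intros E'; apply Hij; lia).
    pose proof (pow2_INR_sub_ge_1 _ _ Hrow). lra.
  - pose proof (pow2_INR_sub_ge_1 _ _ E). lra.
Qed.

Lemma grid_point_in_workspace W H dx dy L i : (i < W * H)%nat ->
  /2 <= dx -> INR W + dx <= L + /2 -> /2 <= dy -> INR H + dy <= L + /2 ->
  in_workspace L (/2) (grid_point W dx dy i).
Proof.
  intros Hi Hdx HdxL Hdy HdyL z Hz.
  apply in_open_disc_coords in Hz; [|lra]. unfold grid_point in Hz; simpl in Hz.
  assert (HW : (W <> 0)%nat) by (intros ->; simpl in Hi; lia).
  assert (Hcol : INR (i mod W) + 1 <= INR W).
  { rewrite <- S_INR. apply le_INR. pose proof (Nat.mod_upper_bound i W HW). lia. }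
  assert (Hrow : INR (i / W) + 1 <= INR H).
  { rewrite <- S_INR. apply le_INR. pose proof (Nat.Div0.div_lt_upper_bound i W H Hi). lia. }
  pose proof (pos_INR (i mod W)). pose proof (pos_INR (i / W)).
  lra.
Qed.

Definition grid_size (q : nat) : nat := (2 * q * S (2 * q))%nat.
Definition start_pose (q : nat) : nat -> point := grid_point (S (2 * q)) (/2) 1.
Definition goal_pose (q : nat) : nat -> point := grid_point (2 * q) 1 (/2).

Lemma grid_instance_valid q :
  valid_instance (grid_size q) (/2) (INR (S (2 * q))) (start_pose q) (goal_pose q).
Proof.
  assert (HL : INR (S (2 * q)) = INR (2 * q) + 1) by apply S_INR.
  assert (Hsep : forall W dx dy i j, (W <> 0)%nat -> i <> j ->
            ~ overlap (/2) (grid_point W dx dy i) (grid_point W dx dy j)).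
  { intros W dx dy i j HW Hij Hov. apply overlap_iff in Hov; [|lra].
    pose proof (grid_point_sep W dx dy i j HW Hij). lra. }
  unfold valid_instance, grid_size, start_pose, goal_pose.
  split; [lra|]. split; [|split].
  - intros i Hi. split.
    + apply (grid_point_in_workspace _ (2 * q)); try lra; nia.
    + apply (grid_point_in_workspace _ (S (2 * q))); try lra; nia.
  - intros i j _ _ Hij. apply Hsep; lia.
  - intros i j Hi _ Hij. apply Hsep; [lia|auto].
Qed.

Lemma goal_start_overlap q b a t c : (a < 2 * q)%nat -> (c < S (2 * q))%nat ->
  (t = b \/ S t = b)%nat -> (c = a \/ c = S a)%nat ->
  overlap (/2) (goal_pose q (b * (2 * q) + a)) (start_pose q (t * S (2 * q) + c)).
Proof.
  intros Ha Hc Htb Hca. unfold goal_pose, start_pose.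
  rewrite !grid_point_index by assumption.
  apply overlap_iff; [lra|]. unfold dist2; simpl.
  destruct Htb as [->| <-]; destruct Hca as [->| ->]; rewrite ?S_INR; lra.
Qed.

Local Open Scope nat_scope.

Lemma buffers_at_half q (vacated inbuf atgoal filled : nat -> bool) :
  (forall i, i < grid_size q -> vacated i = true -> inbuf i = true \/ atgoal i = true) ->
  count_lt atgoal (grid_size q) <= count_lt filled (grid_size q) ->
  count_lt filled (grid_size q) = q * S (2 * q) ->
  (forall j x, j < grid_size q -> x < grid_size q -> filled j = true ->
     overlap (/2) (goal_pose q j) (start_pose q x) -> vacated x = true) ->
  q <= count_lt inbuf (grid_size q).
Proof.
  unfold grid_size. intros Hsplit Hat Hhalf Hcover.
  assert (Hexcess : q * S (2 * q) + q <= count_lt vacated (2 * q * S (2 * q))).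
  { apply (half_filled_vacated (2 * q) filled vacated); [|reflexivity|exact Hhalf].
    intros b a t c Hb Ha Ht Htb Hca Hf.
    apply (Hcover (b * (2 * q) + a)); [nia|nia|exact Hf|].
    apply goal_start_overlap; lia. }
  assert (count_lt vacated (2 * q * S (2 * q)) <=
            count_lt inbuf (2 * q * S (2 * q)) + count_lt atgoal (2 * q * S (2 * q)))
    by (apply count_lt_or; auto).
  lia.
Qed.

Lemma le_fold_max_map {T} (f : T -> nat) l x :
  In x l -> f x <= fold_right Nat.max 0 (map f l).
Proof. induction l as [|y l IH]; simpl; [tauto|]. intros [->|H]; [lia|]. specialize (IH H). lia. Qed.

Definition at_goal (st : ustate) (i : nat) : bool :=
  match st i with UAtGoal _ => true | _ => false end.
Definition left_start (st : ustate) (i : nat) : bool :=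
  match st i with UAtStart => false | _ => true end.
Definition in_buffer (st : ustate) (i : nat) : bool :=
  match st i with UInBuf => true | _ => false end.
Definition goal_occupied (n : nat) (st : ustate) (j : nat) : bool :=
  existsb (fun i => match st i with UAtGoal j' => Nat.eqb j' j | _ => false end) (seq 0 n).

Definition sound_ustate n r s g (st : ustate) : Prop :=
  (forall i j, i < n -> st i = UAtGoal j ->
     j < n /\ forall x, x < n -> overlap r (g j) (s x) -> st x <> UAtStart) /\
  (forall i i' j, i < n -> i' < n -> st i = UAtGoal j -> st i' = UAtGoal j -> i = i').

(* For [UToBuf] no goal gets filled, and [0] is a dummy value. *)
Definition uaction_goal (a : uaction) : nat :=
  match a with UDirect _ j | UFromBuf _ j => j | UToBuf _ => 0 end.

Lemma goal_occupiedP n st j :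
  goal_occupied n st j = true <-> exists i, i < n /\ st i = UAtGoal j.
Proof.
  unfold goal_occupied. rewrite existsb_exists. split.
  - intros [i [Hi E]]. apply in_seq in Hi. exists i. split; [lia|].
    destruct (st i); try discriminate. apply Nat.eqb_eq in E. congruence.
  - intros [i [Hi E]]. exists i. split; [apply in_seq; lia|]. rewrite E. apply Nat.eqb_refl.
Qed.

Lemma sound_uupd_goal n r s g st i j :
  sound_ustate n r s g st -> i < n -> st i <> UAtGoal j -> ufree n r s g st i j ->
  sound_ustate n r s g (uupd st i (UAtGoal j)).
Proof.
  intros [Hclear Hinj] Hi Hni [Hj [Hunocc Hfree]]. unfold uupd. split.
  - intros i' j' Hi' Hg. destruct (Nat.eq_dec i' i) as [->|Hne].
    + injection Hg as <-. split; [auto|]. intros x Hx Hov.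
      destruct (Nat.eq_dec x i) as [->|Hxi]; [discriminate|].
      specialize (Hfree x Hx Hxi). unfold upos in Hfree. intros Hs. rewrite Hs in Hfree. auto.
    + destruct (Hclear i' j' Hi' Hg) as [Hj' Hx']. split; [auto|]. intros x Hx Hov.
      destruct (Nat.eq_dec x i); [discriminate|]. auto.
  - intros a b j' Ha Hb Ea Eb.
    destruct (Nat.eq_dec a i), (Nat.eq_dec b i); try congruence.
    + injection Ea as <-. exfalso. apply (Hunocc b Hb Eb).
    + injection Eb as <-. exfalso. apply (Hunocc a Ha Ea).
    + apply (Hinj a b j'); auto.
Qed.

Lemma sound_uapply n r s g st a :
  sound_ustate n r s g st -> ustep_ok n r s g st a -> sound_ustate n r s g (uapply st a).
Proof.
  intros Hsound Hok. destruct a as [i j|i|i j]; simpl in *.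
  - destruct Hok as [Hi [Hs Hf]]. apply sound_uupd_goal; auto. congruence.
  - destruct Hsound as [Hclear Hinj]. unfold uupd. split.
    + intros i' j' Hi' Hg. destruct (Nat.eq_dec i' i); [discriminate|].
      destruct (Hclear i' j' Hi' Hg) as [Hj' Hx']. split; [auto|]. intros x Hx Hov.
      destruct (Nat.eq_dec x i); [discriminate|]. auto.
    + intros a b j' Ha Hb Ea Eb.
      destruct (Nat.eq_dec a i), (Nat.eq_dec b i); try congruence. eauto.
  - destruct Hok as [Hi [Hs Hf]]. apply sound_uupd_goal; auto. congruence.
Qed.

Lemma count_goal_occupied_uapply n st a :
  count_lt (goal_occupied n (uapply st a)) n <= count_lt (goal_occupied n st) n + 1.
Proof.
  apply (count_lt_add_one _ _ (uaction_goal a)). intros j _ Hj.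
  apply goal_occupiedP in Hj as [i [Hi E]].
  destruct a as [i0 j0|i0|i0 j0]; simpl in E; unfold uupd in E;
    destruct (Nat.eq_dec i i0); try (injection E as ->; auto);
    try discriminate; left; apply goal_occupiedP; eauto.
Qed.

Lemma count_at_goal_le_occupied n r s g st : sound_ustate n r s g st ->
  count_lt (at_goal st) n <= count_lt (goal_occupied n st) n.
Proof.
  intros [Hclear Hinj].
  apply (count_lt_inj _ _ (fun i => match st i with UAtGoal j => j | _ => 0 end)).
  - intros i Hi Ha. unfold at_goal in Ha. destruct (st i) as [| |j] eqn:E; try discriminate.
    split; [apply (Hclear i j Hi E)|]. apply goal_occupiedP. eauto.
  - intros i i' Hi Hi' Ha Ha'. unfold at_goal in *.
    destruct (st i) eqn:E; try discriminate. destruct (st i') eqn:E'; try discriminate.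
    intros ->. eauto.
Qed.

Lemma count_goal_occupied_final n st :
  ufinal n st -> count_lt (goal_occupied n st) n = n.
Proof. intros Hfin. apply count_lt_all. intros j Hj. apply goal_occupiedP. auto. Qed.

Lemma ustates_hit_occupied n r s g m : m <= n ->
  forall plan st, uplan_ok n r s g st plan -> sound_ustate n r s g st ->
  count_lt (goal_occupied n st) n <= m ->
  exists st', In st' (ustates st plan) /\ sound_ustate n r s g st' /\
              count_lt (goal_occupied n st') n = m.
Proof.
  intros Hm plan. induction plan as [|a plan IH]; intros st Hok Hsound Hle.
  - exists st. simpl in *. rewrite count_goal_occupied_final in * by assumption.
    split; [auto|]. split; [auto|lia].
  - destruct (Nat.eq_dec (count_lt (goal_occupied n st) n) m) as [Heq|Hne].
    + exists st. simpl. auto.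
    + destruct Hok as [Ha Hplan].
      pose proof (count_goal_occupied_uapply n st a).
      destruct (IH (uapply st a) Hplan (sound_uapply _ _ _ _ _ _ Hsound Ha)) as [st' [Hin H']];
        [lia|].
      exists st'. simpl. auto.
Qed.

Lemma unlabeled_buffers_ge q plan :
  uplan_ok (grid_size q) (/2) (start_pose q) (goal_pose q) uinit plan ->
  q <= umax_buffers (grid_size q) plan.
Proof.
  intros Hok. set (n := grid_size q) in *.
  assert (Hsound0 : sound_ustate n (/2)%R (start_pose q) (goal_pose q) uinit)
    by (split; intros; discriminate).
  assert (Hempty : count_lt (goal_occupied n uinit) n = 0).
  { apply count_lt_none. intros j _. apply Bool.not_true_iff_false.
    intros [i [_ E]]%goal_occupiedP. discriminate. }
  destruct (ustates_hit_occupied n _ _ _ (q * S (2 * q)) ltac:(unfold n, grid_size; nia)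
              plan uinit Hok Hsound0 ltac:(lia)) as [st [Hin [Hsound Hhalf]]].
  eapply Nat.le_trans; [|apply (le_fold_max_map (ubuf_count n) _ _ Hin)].
  unfold ubuf_count. rewrite count_lt_filter.
  apply (buffers_at_half q (left_start st) (in_buffer st) (at_goal st) (goal_occupied n st)).
  - intros i _. unfold left_start, in_buffer, at_goal. destruct (st i); auto.
  - eapply count_at_goal_le_occupied; eauto.
  - exact Hhalf.
  - intros j x _ Hx Hj Hov. apply goal_occupiedP in Hj as [i [Hi E]].
    destruct Hsound as [Hclear _]. destruct (Hclear i j Hi E) as [_ Hx'].
    unfold left_start. destruct (st x) eqn:Ex; auto. exfalso. exact (Hx' x Hx Hov Ex).
Qed.

Definition to_ustate (sigma : nat -> nat) (st : lstate) : ustate :=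
  fun i => match st i with
           | LAtStart => UAtStart
           | LInBuf => UInBuf
           | LAtGoal => UAtGoal (sigma i)
           end.

Definition to_uaction (sigma : nat -> nat) (a : laction) : uaction :=
  match a with
  | LDirect i => UDirect i (sigma i)
  | LToBuf i => UToBuf i
  | LFromBuf i => UFromBuf i (sigma i)
  end.

Lemma is_perm_surj n sigma j : is_perm n sigma -> j < n -> exists i, i < n /\ sigma i = j.
Proof.
  intros [Hrange Hinj] Hj.
  assert (Hincl : incl (seq 0 n) (map sigma (seq 0 n))).
  { apply NoDup_length_incl.
    - apply NoDup_map_NoDup_ForallPairs; [|apply seq_NoDup].
      intros x y Hx Hy. apply in_seq in Hx, Hy. apply Hinj; lia.
    - rewrite length_map. lia.
    - intros y Hy. apply in_map_iff in Hy as [x [<- Hx]]. apply in_seq in Hx.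
      apply in_seq. specialize (Hrange x). lia. }
  destruct (in_map_iff sigma (seq 0 n) j) as [Hsurj _].
  destruct Hsurj as [i [Hi Hin]]; [apply Hincl, in_seq; lia|].
  apply in_seq in Hin. exists i. split; [lia|auto].
Qed.

Lemma to_ustate_lapply sigma st a :
  to_ustate sigma (lapply st a) = uapply (to_ustate sigma st) (to_uaction sigma a).
Proof.
  extensionality k. unfold to_ustate.
  destruct a as [i|i|i]; simpl; unfold lupd, uupd; destruct (Nat.eq_dec k i); subst; auto.
Qed.

Lemma lstep_to_ustep n r s g sigma st a : is_perm n sigma ->
  lstep_ok n r s (fun i => g (sigma i)) st a ->
  ustep_ok n r s g (to_ustate sigma st) (to_uaction sigma a).
Proof.
  intros Hperm Hok.
  assert (Hfree : forall i, i < n -> st i <> LAtGoal ->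
            lfree n r s (fun i => g (sigma i)) st i (g (sigma i)) ->
            ufree n r s g (to_ustate sigma st) i (sigma i)).
  { intros i Hi Hni Hf. destruct Hperm as [Hrange Hinj].
    split; [auto|split].
    - intros k Hk E. unfold to_ustate in E. destruct (st k) eqn:Ek; try discriminate.
      injection E as E. apply Hinj in E; auto. congruence.
    - intros k Hk Hki. specialize (Hf k Hk Hki).
      unfold upos, lpos, to_ustate in *. destruct (st k); auto. }
  destruct a as [i|i|i]; simpl in *.
  - destruct Hok as [Hi [Hs Hf]]. unfold to_ustate. rewrite Hs.
    split; [auto|split; [auto|]]. apply Hfree; auto. congruence.
  - destruct Hok as [Hi Hs]. unfold to_ustate. rewrite Hs. auto.
  - destruct Hok as [Hi [Hs Hf]]. unfold to_ustate. rewrite Hs.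
    split; [auto|split; [auto|]]. apply Hfree; auto. congruence.
Qed.

Lemma lplan_to_uplan n r s g sigma : is_perm n sigma ->
  forall plan st, lplan_ok n r s (fun i => g (sigma i)) st plan ->
  uplan_ok n r s g (to_ustate sigma st) (map (to_uaction sigma) plan).
Proof.
  intros Hperm plan. induction plan as [|a plan IH]; intros st Hok; simpl in *.
  - intros j Hj. destruct (is_perm_surj n sigma j Hperm Hj) as [i [Hi <-]].
    exists i. split; [auto|]. unfold to_ustate. rewrite Hok; auto.
  - destruct Hok as [Ha Hplan]. split; [apply lstep_to_ustep; auto|].
    rewrite <- to_ustate_lapply. auto.
Qed.

Lemma lmax_buffers_to_u n sigma plan :
  lmax_buffers n plan = umax_buffers n (map (to_uaction sigma) plan).
Proof.
  unfold lmax_buffers, umax_buffers.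
  assert (Htraj : forall st, map (to_ustate sigma) (lstates st plan) =
                             ustates (to_ustate sigma st) (map (to_uaction sigma) plan)).
  { induction plan as [|a plan IH]; intros st; simpl; [reflexivity|].
    rewrite IH, to_ustate_lapply. reflexivity. }
  change uinit with (to_ustate sigma linit). rewrite <- Htraj, map_map. f_equal. apply map_ext. intros st.
  unfold lbuf_count, ubuf_count. f_equal. apply filter_ext. intros k.
  unfold to_ustate. destruct (st k); reflexivity.
Qed.

Local Open Scope R_scope.

Lemma sqrt_grid_size_le q : / 3 * sqrt (INR (grid_size q)) <= INR q.
Proof.
  assert (Hsize : INR (grid_size q) <= (3 * INR q) ^ 2).
  { assert (Hnat : (grid_size q <= 9 * q * q)%nat) by (unfold grid_size; nia).
    apply le_INR in Hnat. rewrite !mult_INR in Hnat. simpl in *. lra. }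
  pose proof (pos_INR q).
  assert (sqrt (INR (grid_size q)) <= 3 * INR q).
  { rewrite <- (sqrt_pow2 (3 * INR q)) by lra. apply sqrt_le_1_alt. auto. }
  lra.
Qed.

Theorem theorem3 :
  exists c : R, 0 < c /\
  forall N : nat, exists n : nat, (N <= n)%nat /\
    exists (r L : R) (s g : nat -> point),
      valid_instance n r L s g /\
      (* unlabeled MRB >= c sqrt n: every valid plan reaches c sqrt n buffers *)
      (forall plan : list uaction,
          uplan_ok n r s g uinit plan ->
          c * sqrt (INR n) <= INR (umax_buffers n plan)) /\
      (* labeled MRB >= c sqrt n, for every labeling (start i must go to goal sigma i) *)
      (forall sigma : nat -> nat, is_perm n sigma ->
        forall plan : list laction,
          lplan_ok n r s (fun i => g (sigma i)) linit plan ->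
          c * sqrt (INR n) <= INR (lmax_buffers n plan)).
Proof.
  exists (/3). split; [lra|]. intros N.
  set (q := S N). exists (grid_size q). split; [unfold grid_size, q; nia|].
  exists (/2), (INR (S (2 * q))), (start_pose q), (goal_pose q).
  pose proof (sqrt_grid_size_le q) as Hsqrt.
  split; [apply grid_instance_valid|]. split.
  - intros plan Hok. apply (unlabeled_buffers_ge q plan), le_INR in Hok. lra.
  - intros sigma Hperm plan Hok. rewrite (lmax_buffers_to_u _ sigma).
    apply (lplan_to_uplan _ _ _ _ _ Hperm) in Hok.
    apply (unlabeled_buffers_ge q), le_INR in Hok. lra.
Qed.
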